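(* Let $\oplus$ be a combinator whose domain is the set of all pairs of tpos over $W$. Then $\oplus$ is a TeamQueue combinator if and only if $\oplus$ is basic and satisfies, for all pairs $\langle\preceq_1,\preceq_2\rangle$ and all $x,y,z \in W$: ($\oplus$SPU+) if $x \prec_1 y$ and $z \prec_2 y$ then $x \prec_{1\oplus 2} y$ or $z \prec_{1\oplus 2} y$; ($\oplus$WPU+) if $x \preceq_1 y$ and $z \preceq_2 y$ then $x \preceq_{1\oplus 2} y$ or $z \preceq_{1\oplus 2} y$; ($\oplus$NO) for $i \neq j$ in $\{1,2\}$, if $x \prec_i y$ and $z \preceq_j y$ then $x \prec_{1\oplus 2} y$ or $z \preceq_{1\oplus 2} y$.
   Context: $W$ is a finite nonempty set (of possible worlds). A tpo is a total preorder on $W$; $\prec$ and $\sim$ denote strict and symmetric parts. For $S \subseteq W$, $\min(\preceq, S) = \{x \in S : x \preceq y \text{ for all } y \in S\}$. A combinator $\oplus$ maps pairs of tpos $\langle\preceq_1,\preceq_2\rangle$ in its domain to a tpo $\preceq_{1\oplus 2}$. It is basic if $\min(\preceq_{1\oplus 2}, W) = \min(\preceq_1, W) \cup \min(\preceq_2, W)$ for every pair in its domain. $\oplus$ is a TeamQueue combinator if for each pair $\langle\preceq_1,\preceq_2\rangle$ in its domain there is a sequence $\langle a(i)\rangle_{i \in \mathbb{N}}$ (depending on the pair) with $\emptyset \neq a(i) \subseteq \{1,2\}$ for all $i$ and $a(1) = \{1,2\}$, such that $\preceq_{1\oplus 2}$ is the tpo whose ordered partition into ranks (lowest = most plausible first)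 is $\langle T_1, \ldots, T_m\rangle$, where inductively $T_i = \bigcup_{j \in a(i)} \min(\preceq_j, \bigcap_{k<i} T_k^c)$ ($T^c$ the complement of $T$ in $W$) and $m$ is minimal with $\bigcup_{i \le m} T_i = W$; i.e. $x \preceq_{1\oplus 2} y$ iff the index of the cell containing $x$ is at most that of the cell containing $y$. *)

From mathcomp Require Import all_boot.
Set Implicit Arguments. Unset Strict Implicit. Unset Printing Implicit Defensive.

Section TPO.
Variable W : finType.

Definition is_tpo (r : rel W) : Prop := total r /\ transitive r.

Definition tpo := {r : rel W | is_tpo r}.

Definition le (p : tpo) (x y : W) : bool := sval p x y.
Definition lt (p : tpo) (x y : W) : bool := le p x y && ~~ le p y x.

Definition minset (p : tpo) (S : {set W}) : {set W} :=
  [set x in S | [forall y in S, le p x y]].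

Definition combinator := tpo -> tpo -> tpo.

Definition basic (comb : combinator) : Prop :=
  forall p1 p2 : tpo,
    minset (comb p1 p2) [set: W] = minset p1 [set: W] :|: minset p2 [set: W].

(* index j : 'I_2, with 0 standing for 1 and 1 standing for 2 *)
Definition sel (p1 p2 : tpo) (j : 'I_2) : tpo :=
  if nat_of_ord j == 0%N then p1 else p2.

(* rest a i = complement of T_1 u ... u T_i ; cell a i = T_i (for i >= 1) *)
Fixpoint rest (p1 p2 : tpo) (a : nat -> {set 'I_2}) (i : nat) : {set W} :=
  match i with
  | 0 => [set: W]
  | i'.+1 => rest p1 p2 a i' :\:
             \bigcup_(j in a i'.+1) minset (sel p1 p2 j) (rest p1 p2 a i')
  end.

Definition cell (p1 p2 : tpo) (a : nat -> {set 'I_2}) (i : nat) : {set W} :=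
  \bigcup_(j in a i) minset (sel p1 p2 j) (rest p1 p2 a i.-1).

Definition TeamQueue (comb : combinator) : Prop :=
  forall p1 p2 : tpo,
  exists a : nat -> {set 'I_2},
    [/\ (forall i, (1 <= i)%N -> a i != set0),
        a 1%N = [set: 'I_2] &
        exists m : nat,
          [/\ rest p1 p2 a m = set0,
              (forall k, (k < m)%N -> rest p1 p2 a k != set0) &
              forall x y : W,
                le (comb p1 p2) x y <->
                exists i j : nat,
                  [/\ (1 <= i)%N, (i <= j)%N, (j <= m)%N,
                      x \in cell p1 p2 a i & y \in cell p1 p2 a j]]].

Definition SPU_plus (comb : combinator) : Prop :=
  forall (p1 p2 : tpo) (x y z : W),
    lt p1 x y -> lt p2 z y -> lt (comb p1 p2) x y \/ lt (comb p1 p2) z y.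

Definition WPU_plus (comb : combinator) : Prop :=
  forall (p1 p2 : tpo) (x y z : W),
    le p1 x y -> le p2 z y -> le (comb p1 p2) x y \/ le (comb p1 p2) z y.

Definition NO (comb : combinator) : Prop :=
  forall (p1 p2 : tpo) (x y z : W),
    (lt p1 x y -> le p2 z y -> lt (comb p1 p2) x y \/ le (comb p1 p2) z y) /\
    (lt p2 x y -> le p1 z y -> lt (comb p1 p2) x y \/ le (comb p1 p2) z y).

End TPO.

From mathcomp Require Import all_boot.
From Pilot Require Import Defs.
Set Implicit Arguments. Unset Strict Implicit. Unset Printing Implicit Defensive.

(* A world y lands in cell k because it is minimal, on what is left after the
   first k - 1 cells, for one of the two input orders q; hence x <_q y forces
   x <_c y and x <=_q y forces x <=_c y, and each postulate follows by
   choosing which of x, z to use according to q.  Conversely, under the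
   postulates, for every set S the c-minimal worlds of S are the q1-minimal
   ones, the q2-minimal ones, or their union: SPU+ puts them inside the union,
   and a c-minimal q1-minimal world next to a q1-minimal world that is not
   c-minimal forces, through WPU+ and NO, the c-minima to be the q2-minima.
   So the ranks of c, peeled off one at a time, are the cells of a team
   sequence. *)

Section TpoFacts.
Variable W : finType.
Implicit Types (p : tpo W) (S : {set W}).

Lemma le_refl p x : le p x x.
Proof.
case: p => r H; rewrite /le /=; case: H => tot _.
by have := tot x x; rewrite orbb.
Qed.

Lemma le_trans p x y z : le p x y -> le p y z -> le p x z.
Proof. case: p => r H; rewrite /le /=; case: H => _ tr; exact: tr. Qed.

Lemma le_total p x y : le p x y || le p y x.
Proof. case: p => r H; rewrite /le /=; case: H => tot _; exact: tot. Qed.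

Lemma leNgt p x y : le p x y = ~~ lt p y x.
Proof.
rewrite /lt negb_and negbK; case: (boolP (le p y x)) => //= /negbTE leyxF.
by have := le_total p x y; rewrite leyxF orbF => ->.
Qed.

Lemma ltNge p x y : lt p x y = ~~ le p y x.
Proof. by rewrite leNgt negbK. Qed.

Lemma lt_geF p x y : lt p x y -> le p y x = false.
Proof. by case/andP => _ /negbTE. Qed.

Lemma minsetP p S x :
  reflect (x \in S /\ forall y, y \in S -> le p x y) (x \in minset p S).
Proof.
rewrite /minset inE; apply: (iffP andP) => -[xS xmin]; split=> //.
  exact/forall_inP.
exact/forall_inP.
Qed.

Lemma minset_mem p S x : x \in minset p S -> x \in S.
Proof. by case/minsetP. Qed.

Lemma minset_le p S x y : x \in minset p S -> y \in S -> le p x y.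
Proof. by case/minsetP => _; apply. Qed.

Lemma minset_le_mem p S x y :
  y \in minset p S -> x \in S -> le p x y -> x \in minset p S.
Proof.
move=> /minsetP [_ ymin] xS lexy; apply/minsetP; split=> // z zS.
exact: le_trans lexy (ymin z zS).
Qed.

Lemma minsetPn p S x :
  x \in S -> x \notin minset p S -> exists2 y, y \in S & lt p y x.
Proof.
move=> xS /minsetP xmin.
have /forall_inPn [y yS /negbTE lexyF] : ~~ [forall y in S, le p x y].
  by apply: contra_notN xmin => /forall_inP; split.
by exists y; rewrite // -[lt _ _ _]negbK -leNgt lexyF.
Qed.

Lemma minset_neq0 p S : S != set0 -> minset p S != set0.
Proof.
case/set0Pn => x0 x0S; pose below x := [set y in S | le p y x].
case: (arg_minnP (fun x => #|below x|) x0S) => x xS xmin.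
apply/set0Pn; exists x; apply/minsetP; split=> // y yS.
rewrite leNgt; apply/negP => /andP [leyx nlexy].
have: #|below y| < #|below x|.
  apply/proper_card/properP; split.
    by apply/subsetP => z; rewrite !inE => /andP [-> /le_trans]; apply.
  by exists x; rewrite !inE ?le_refl ?(negbTE nlexy) ?andbT ?andbF.
by rewrite ltnNge xmin.
Qed.

End TpoFacts.

Section QueueAxioms.
Variable W : finType.

Definition queue_axioms (c q1 q2 : tpo W) : Prop :=
  [/\ forall x y z, lt q1 x y -> lt q2 z y -> lt c x y \/ lt c z y,
      forall x y z, le q1 x y -> le q2 z y -> le c x y \/ le c z y,
      forall x y z, lt q1 x y -> le q2 z y -> lt c x y \/ le c z y &
      forall x y z, lt q2 x y -> le q1 z y -> lt c x y \/ le c z y].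

Lemma queue_axiomsC (c q1 q2 : tpo W) : queue_axioms c q1 q2 -> queue_axioms c q2 q1.
Proof.
case=> SPU WPU NO12 NO21; split=> // x y z h2 h1.
  by case: (SPU z y x h1 h2); [right|left].
by case: (WPU z y x h1 h2); [right|left].
Qed.

Definition is_team_queue (c p1 p2 : tpo W) : Prop :=
  exists a : nat -> {set 'I_2},
    [/\ (forall i, (1 <= i)%N -> a i != set0),
        a 1%N = [set: 'I_2] &
        exists m : nat,
          [/\ rest p1 p2 a m = set0,
              (forall k, (k < m)%N -> rest p1 p2 a k != set0) &
              forall x y : W,
                le c x y <->
                exists i j : nat,
                  [/\ (1 <= i)%N, (i <= j)%N, (j <= m)%N,
                      x \in cell p1 p2 a i & y \in cell p1 p2 a j]]].

Lemma sel_cases (p1 p2 : tpo W) (j : 'I_2) : sel p1 p2 j = p1 \/ sel p1 p2 j = p2.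
Proof. by case: j => -[|[|//]] ? /=; [left|right]. Qed.

Lemma bigcup_sel_setT (p1 p2 : tpo W) (S : {set W}) :
  \bigcup_(j in [set: 'I_2]) minset (sel p1 p2 j) S = minset p1 S :|: minset p2 S.
Proof.
apply/setP => x; rewrite inE; apply/bigcupP/orP.
  by case=> -[[|[|//]]] ? _ /= h; [left|right].
by case=> h; [exists ord0|exists ord_max].
Qed.

End QueueAxioms.

Section Peeling.
Variables (W : finType) (p1 p2 : tpo W) (a : nat -> {set 'I_2}).
Local Notation rest := (rest p1 p2 a).
Local Notation cell := (cell p1 p2 a).

Lemma rest_succ k : rest k.+1 = rest k :\: cell k.+1.
Proof. by []. Qed.

Lemma cell_sub_rest k : cell k.+1 \subset rest k.
Proof. by apply/bigcupsP => j _; apply/subsetP => x /minset_mem. Qed.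

Lemma rest_decr i j : (i <= j)%N -> rest j \subset rest i.
Proof.
elim: j => [|j IH]; first by rewrite leqn0 => /eqP ->.
rewrite leq_eqVlt ltnS => /predU1P [-> // | leij].
exact: subset_trans (subsetDl _ _) (IH leij).
Qed.

Lemma cell_rest x i k : x \in cell i.+1 -> (k <= i)%N -> x \in rest k.
Proof. by move=> /(subsetP (cell_sub_rest i)) xi /rest_decr /subsetP; apply. Qed.

Lemma cell_uniq x i j : x \in cell i.+1 -> x \in cell j.+1 -> i = j.
Proof.
have notin_cell k l : (k < l)%N -> x \in cell l.+1 -> x \notin cell k.+1.
  by move=> ltkl /cell_rest /(_ ltkl); rewrite rest_succ inE => /andP [].
move=> xi xj; case: (ltngtP i j) => // [ltij | ltji].
  by rewrite (negbTE (notin_cell _ _ ltij xj)) in xi.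
by rewrite (negbTE (notin_cell _ _ ltji xi)) in xj.
Qed.

Lemma notin_rest_cell x m : x \notin rest m -> exists2 k, (k < m)%N & x \in cell k.+1.
Proof.
elim: m => [|m IH]; first by rewrite inE.
case: (boolP (x \in rest m)) => [xm | /IH [k ltkm xk] _].
  by rewrite rest_succ inE xm andbT negbK; exists m.
by exists k; rewrite // ltnW.
Qed.

Lemma rest_card_eq0 :
  (forall k, rest k != set0 -> cell k.+1 != set0) -> rest #|W| = set0.
Proof.
move=> cell_neq0.
have card_rest k : (rest k == set0) || (k + #|rest k| <= #|W|)%N.
  elim: k => [|k IH]; first by rewrite cardsT leqnn orbT.
  case: (eqVneq (rest k) set0) => [rk0 | /[dup] rk_neq0 /cell_neq0 /set0Pn [x xk]].
    by rewrite rest_succ rk0 set0D eqxx.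
  rewrite (negbTE rk_neq0) /= in IH; apply/orP; right; apply: leq_trans IH.
  rewrite addSn ltn_add2l; apply/proper_card/properP; split; first exact: subsetDl.
  by exists x; [exact: subsetP (cell_sub_rest k) x xk | rewrite rest_succ inE xk].
have /predU1P [//|] := card_rest #|W|.
by rewrite -[X in (_ <= X)%N]addn0 leq_add2l leqn0 cards_eq0 => /eqP.
Qed.

Lemma le_cell_minset (c : tpo W) :
    (forall n, cell n.+1 = minset c (rest n)) ->
  forall x y k l, x \in cell k.+1 -> y \in cell l.+1 -> le c x y = (k <= l)%N.
Proof.
move=> cellE x y k l; rewrite !cellE => xk yl; case: (leqP k l) => [lekl | ltlk].
  exact: minset_le xk (subsetP (rest_decr lekl) _ (minset_mem yl)).
apply/negbTE/negP => lexy.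
have xl1 : x \in rest l.+1 := subsetP (rest_decr ltlk) _ (minset_mem xk).
move: (xl1); rewrite rest_succ cellE inE => /andP [/negP xnmin _]; apply: xnmin.
exact: minset_le_mem yl (subsetP (rest_decr (leqnSn l)) _ xl1) lexy.
Qed.

End Peeling.

Section Forward.
Variables (W : finType) (c p1 p2 : tpo W) (a : nat -> {set 'I_2}) (m : nat).
Local Notation rest := (rest p1 p2 a).
Local Notation cell := (cell p1 p2 a).
Hypothesis rest_m : rest m = set0.
Hypothesis le_cellsP : forall x y : W,
  le c x y <-> exists i j : nat,
    [/\ (1 <= i)%N, (i <= j)%N, (j <= m)%N, x \in cell i & y \in cell j].

Lemma mem_cell x : exists i, x \in cell i.+1.
Proof.
have [|k _ xk] := @notin_rest_cell _ p1 p2 a x m; last by exists k.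
by rewrite rest_m inE.
Qed.

Lemma cell_lt x i : x \in cell i.+1 -> (i < m)%N.
Proof.
by move=> xi; rewrite ltnNge; apply/negP => /(cell_rest xi); rewrite rest_m inE.
Qed.

Lemma le_cell x y i j : x \in cell i.+1 -> y \in cell j.+1 -> le c x y = (i <= j)%N.
Proof.
move=> xi yj; apply/idP/idP => [|leij].
  case/le_cellsP => [[|i'] [[|j'] [//= _ leij' _ xi' yj']]].
  by rewrite (cell_uniq xi xi') (cell_uniq yj yj').
by apply/le_cellsP; exists i.+1, j.+1; split=> //; exact: cell_lt yj.
Qed.

Lemma queue_witness y :
  exists2 q, q = p1 \/ q = p2 &
    forall x, (lt q x y -> lt c x y) /\ (le q x y -> le c x y).
Proof.
have [k yk] := mem_cell y; have /bigcupP [j ja ymin] := yk.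
exists (sel p1 p2 j); first exact: sel_cases.
move=> x; have [i xi] := mem_cell x; split.
  rewrite !ltNge (le_cell yk xi); apply: contra => leki.
  exact: minset_le ymin (cell_rest xi leki).
rewrite (le_cell xi yk); apply: contraLR; rewrite -ltnNge => ltki.
move: (cell_rest xi ltki); rewrite rest_succ inE => /andP [xnk xrk].
apply: contra xnk => lexy; apply/bigcupP; exists j => //.
exact: minset_le_mem ymin xrk lexy.
Qed.

Lemma team_queue_axioms : queue_axioms c p1 p2.
Proof.
split=> x y z hx hz; have [q [->|->] wq] := queue_witness y;
  have [ltx lex] := wq x; have [ltz lez] := wq z;
  first [by left; auto | by right; auto].
Qed.

Lemma team_queue_basic : (0 < #|W|)%N -> a 1 = [set: 'I_2] ->
  minset c [set: W] = minset p1 [set: W] :|: minset p2 [set: W].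
Proof.
move=> W_gt0 a1; rewrite -bigcup_sel_setT -a1 -/(cell 1).
have [y y1] : exists y, y \in cell 1.
  have /set0Pn [y ymin] : minset p1 [set: W] != set0.
    by apply: minset_neq0; rewrite -cards_eq0 cardsT -lt0n.
  by exists y; rewrite /Defs.cell a1 bigcup_sel_setT inE ymin.
apply/setP => x; apply/idP/idP => [xmin | x1].
  have [i xi] := mem_cell x.
  move: (minset_le xmin (in_setT y)).
  by rewrite (le_cell xi y1) leqn0 => /eqP i0; rewrite -i0.
apply/minsetP; split=> // z _; have [j zj] := mem_cell z.
by rewrite (le_cell x1 zj).
Qed.

End Forward.

Section MinimalLayer.
Variables (W : finType) (c : tpo W).

Lemma minset_subU (q1 q2 : tpo W) S : queue_axioms c q1 q2 ->
  minset c S \subset minset q1 S :|: minset q2 S.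
Proof.
case=> SPU _ _ _; apply/subsetP => y ymin; have yS := minset_mem ymin.
rewrite inE; apply/negPn/negP; rewrite negb_or => /andP [n1 n2].
have [[x xS ltx] [z zS ltz]] := (minsetPn yS n1, minsetPn yS n2).
case: (SPU x y z ltx ltz) => /lt_geF.
  by rewrite (minset_le ymin xS).
by rewrite (minset_le ymin zS).
Qed.

Lemma minset_eq_right (q1 q2 : tpo W) S y w : queue_axioms c q1 q2 ->
    y \in minset c S -> y \in minset q1 S ->
    w \in minset q1 S -> w \notin minset c S ->
  minset c S = minset q2 S.
Proof.
move=> ax ymin yq1 wq1 wnmin; case: (ax) => _ WPU _ NO21.
have [yS wS] := (minset_mem ymin, minset_mem wq1).
have notle u v : u \notin minset c S -> u \in S -> v \in minset c S -> ~~ le c u v.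
  by move=> unmin uS vmin; apply: contra unmin; apply: minset_le_mem vmin uS.
apply/eqP; rewrite eqEsubset; apply/andP; split; apply/subsetP => v.
  move=> vmin; have := subsetP (minset_subU S ax) v vmin; rewrite inE.
  case/orP => [vq1 | //]; apply/negPn/negP => vnq2.
  have [x xS ltx] := minsetPn (minset_mem vmin) vnq2.
  case: (NO21 x v w ltx (minset_le wq1 (minset_mem vmin))) => [/lt_geF | lewv].
    by rewrite (minset_le vmin xS).
  by move: (notle w v wnmin wS vmin); rewrite lewv.
move=> vq2; apply/negPn/negP => vnmin.
case: (WPU w y v (minset_le wq1 yS) (minset_le vq2 yS)) => [lewy | levy].
  by move: (notle w y wnmin wS ymin); rewrite lewy.
by move: (notle v y vnmin (minset_mem vq2) ymin); rewrite levy.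
Qed.

Lemma minset_trichotomy (q1 q2 : tpo W) S : queue_axioms c q1 q2 ->
  [\/ minset c S = minset q1 S :|: minset q2 S, minset c S = minset q1 S
    | minset c S = minset q2 S].
Proof.
have [-> _ | /(minset_neq0 c) /set0Pn [y ymin]] := eqVneq S set0.
  by apply: Or32; apply/setP => x; rewrite !inE.
wlog yq1 : q1 q2 / y \in minset q1 S => [sym ax | ax].
  have := subsetP (minset_subU S ax) y ymin; rewrite inE => /orP [yq1 | yq2].
    exact: sym.
  case: (sym q2 q1 yq2 (queue_axiomsC ax)) => ->;
    by [apply: Or31; rewrite setUC | apply: Or33 | apply: Or32].
have [q1_sub | /subsetPn [w wq1 wnmin]] :=
  boolP (minset q1 S \subset minset c S); last first.
  exact/Or33/(minset_eq_right ax ymin yq1 wq1 wnmin).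
have [q2_sub | /subsetPn [w wq2 wnmin]] := boolP (minset q2 S \subset minset c S).
  by apply/Or31/eqP; rewrite eqEsubset minset_subU // subUset q1_sub q2_sub.
apply: Or32; apply/eqP; rewrite eqEsubset q1_sub andbT.
apply/subsetP => t tmin; apply/negPn/negP => tnq1.
have := subsetP (minset_subU S ax) t tmin; rewrite inE (negbTE tnq1) /= => tq2.
have := minset_eq_right (queue_axiomsC ax) tmin tq2 wq2 wnmin.
by move/setP/(_ t); rewrite tmin (negbTE tnq1).
Qed.

End MinimalLayer.

Section Backward.
Variables (W : finType) (c p1 p2 : tpo W).
Hypothesis axioms : queue_axioms c p1 p2.

Definition team (S : {set W}) : {set 'I_2} :=
  if minset c S == minset p1 S :|: minset p2 S then [set: 'I_2]
  else if minset c S == minset p1 S then [set ord0] else [set ord_max].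

Lemma bigcup_team S : \bigcup_(j in team S) minset (sel p1 p2 j) S = minset c S.
Proof.
rewrite /team; case: ifP => [/eqP -> | neqU]; first exact: bigcup_sel_setT.
case: ifP => [/eqP -> | neq1]; rewrite big_set1 //=.
by case: (minset_trichotomy S axioms) => eqS; rewrite ?eqS ?eqxx in neqU neq1.
Qed.

Lemma team_neq0 S : team S != set0.
Proof.
by rewrite /team; case: ifP => _; [|case: ifP => _]; apply/set0Pn;
  [exists ord0 | exists ord0 | exists ord_max]; rewrite inE.
Qed.

Fixpoint layer n : {set W} :=
  if n is n'.+1 then layer n' :\: minset c (layer n') else [set: W].

Definition team_seq n := team (layer n.-1).

Lemma rest_team_seq n : rest p1 p2 team_seq n = layer n.
Proof. by elim: n => //= n ->; rewrite /team_seq bigcup_team. Qed.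

Lemma cell_team_seq n : cell p1 p2 team_seq n.+1 = minset c (rest p1 p2 team_seq n).
Proof. by rewrite /cell /= rest_team_seq bigcup_team. Qed.

Lemma queue_axioms_team_queue :
  minset c [set: W] = minset p1 [set: W] :|: minset p2 [set: W] ->
  is_team_queue c p1 p2.
Proof.
move=> basic_c; exists team_seq; split=> [i _ | | ]; first exact: team_neq0.
  by rewrite /team_seq /team /= basic_c eqxx.
have rest_end : exists n, rest p1 p2 team_seq n == set0.
  exists #|W|; apply/eqP/rest_card_eq0 => k.
  by rewrite cell_team_seq; apply: minset_neq0.
have [m /eqP rest_m m_min] := ex_minnP rest_end.
exists m; split=> // [k ltkm | x y].
  by apply/negP => /m_min; rewrite leqNgt ltkm.
have in_cell v : exists2 k, (k < m)%N & v \in cell p1 p2 team_seq k.+1.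
  by apply: notin_rest_cell; rewrite rest_m inE.
have [[i _ xi] [j ltjm yj]] := (in_cell x, in_cell y).
rewrite (le_cell_minset cell_team_seq xi yj).
split=> [leij | [[|i'] [[|j'] [//= _ leij' _ xi' yj']]]].
  by exists i.+1, j.+1.
by rewrite (cell_uniq xi xi') (cell_uniq yj yj').
Qed.

End Backward.

Theorem theorem1 (W : finType) (HW : (0 < #|W|)%N) (comb : combinator W) :
  TeamQueue comb <-> [/\ basic comb, SPU_plus comb, WPU_plus comb & NO comb].
Proof.
split=> [TQ | [basic_comb SPU WPU NO_comb] p1 p2]; last first.
  apply: queue_axioms_team_queue (basic_comb p1 p2); split=> [||x y z|x y z];
    by [apply: SPU | apply: WPU | case: (NO_comb p1 p2 x y z)].
have [ax basic_comb] : (forall p1 p2, queue_axioms (comb p1 p2) p1 p2) /\ basic comb.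
  split=> p1 p2; have [a [_ a1 [m [rest_m _ le_cellsP]]]] := TQ p1 p2.
    exact: team_queue_axioms rest_m le_cellsP.
  exact: team_queue_basic rest_m le_cellsP HW a1.
split=> // p1 p2; case: (ax p1 p2) => SPU WPU NO12 NO21 //.
by move=> x y z; split; [apply: NO12 | apply: NO21].
Qed.
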